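(* Let $a=0.19$, $b=0.5095$, $f^-(x)=x$, and $f^+(x)=0$ for $x<a$, $f^+(x)=\frac{(x-a)^2}{(b-a)^2}$ for $a\le x\le b$, $f^+(x)=1$ for $x>b$. Then for all $x,y,z\in[0,1]$, with $q=f^+(x)$, $ALG=y(1-z)+z(1-y)+(1-q)(1-z)+(1-q)(1-y)$ and $LP=x(1-yz)+(1-y)(1-qz)+(1-z)(1-qy)$, we have $2\,LP\ge ALG$; i.e., $2LP(uvw)\ge ALG(uvw)$ for all $(+,-,-)$-triangles.
   Context: For a triangle with one positive edge of length $x$ and two negative edges of lengths $y,z$, with cut probabilities $f^+(x)$, $f^-(y)$, $f^-(z)$, the per-triangle quantities of the pivot rounding algorithm are $ALG=f^-(y)(1-f^-(z))+f^-(z)(1-f^-(y))+(1-f^+(x))(1-f^-(z))+(1-f^+(x))(1-f^-(y))$ and $LP=x(1-f^-(y)f^-(z))+(1-y)(1-f^+(x)f^-(z))+(1-z)(1-f^+(x)f^-(y))$. *)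

From Stdlib Require Import Reals.
Open Scope R_scope.

Definition a_thr : R := 19 / 100.
Definition b_thr : R := 5095 / 10000.

(* cut probability for negative edges *)
Definition fminus (x : R) : R := x.

(* cut probability for positive edges *)
Definition fplus (x : R) : R :=
  if Rlt_dec x a_thr then 0
  else if Rle_dec x b_thr then (x - a_thr) ^ 2 / (b_thr - a_thr) ^ 2
  else 1.

(* Per-triangle quantities for a (+,-,-) triangle with positive edge x
   and negative edges y, z, for general cut-probability functions. *)
Definition ALG (fp fm : R -> R) (x y z : R) : R :=
  fm y * (1 - fm z) + fm z * (1 - fm y)
  + (1 - fp x) * (1 - fm z) + (1 - fp x) * (1 - fm y).

Definition LP (fp fm : R -> R) (x y z : R) : R :=
  x * (1 - fm y * fm z) + (1 - y) * (1 - fp x * fm z)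
  + (1 - z) * (1 - fp x * fm y).

(* With [f^- = id], 2 LP - ALG factors as
   [((1-y)+(1-z)) (2x - q) + (1-y)(1-z) (2 + 4q - 2x)] with [q = f^+(x)],
   so it suffices that [0 <= f^+(x) <= 2x].  The quadratic ramp stays below
   [2x] because it is below the linear ramp [(x-a)/(b-a)], whose slope
   [1/(b-a)] is small enough, and [f^+ = 1] only beyond [b > 1/2]. *)
From Stdlib Require Import Reals Lra.
Open Scope R_scope.

Lemma two_LP_ge_ALG_fminus (fp : R -> R) (x y z : R) :
  x <= 1 -> y <= 1 -> z <= 1 -> 0 <= fp x <= 2 * x ->
  2 * LP fp fminus x y z >= ALG fp fminus x y z.
Proof.
  intros Hx Hy Hz Hq; unfold LP, ALG, fminus; set (q := fp x) in *.
  assert (Hdiff : 2 * (x * (1 - y * z) + (1 - y) * (1 - q * z) + (1 - z) * (1 - q * y))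
      - (y * (1 - z) + z * (1 - y) + (1 - q) * (1 - z) + (1 - q) * (1 - y))
    = ((1 - y) + (1 - z)) * (2 * x - q) + (1 - y) * (1 - z) * (2 + 4 * q - 2 * x))
    by ring.
  assert (0 <= ((1 - y) + (1 - z)) * (2 * x - q)) by (apply Rmult_le_pos; lra).
  assert (0 <= (1 - y) * (1 - z) * (2 + 4 * q - 2 * x))
    by (apply Rmult_le_pos; [apply Rmult_le_pos|]; lra).
  lra.
Qed.

Lemma fplus_below (x : R) : x < a_thr -> fplus x = 0.
Proof.
  intros Hxa; unfold fplus.
  destruct (Rlt_dec x a_thr); [reflexivity | contradiction].
Qed.

Lemma fplus_ramp (x : R) : a_thr <= x <= b_thr ->
  fplus x = ((x - a_thr) / (b_thr - a_thr)) ^ 2.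
Proof.
  intros [Hax Hxb]; unfold fplus.
  destruct (Rlt_dec x a_thr); [lra|].
  destruct (Rle_dec x b_thr); [|lra].
  unfold a_thr, b_thr; field.
Qed.

Lemma fplus_above (x : R) : b_thr < x -> fplus x = 1.
Proof.
  intros Hbx; unfold fplus.
  destruct (Rlt_dec x a_thr); [unfold a_thr, b_thr in *; lra|].
  destruct (Rle_dec x b_thr); [lra | reflexivity].
Qed.

Lemma fplus_between_0_twice (x : R) : 0 <= x -> 0 <= fplus x <= 2 * x.
Proof.
  intros Hx.
  destruct (Rlt_dec x a_thr) as [Hxa|Hxa]; [rewrite fplus_below; lra|].
  destruct (Rle_dec x b_thr) as [Hxb|Hxb].
  - rewrite fplus_ramp by lra.
    set (t := (x - a_thr) / (b_thr - a_thr)).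
    assert (Ht : 0 <= t <= 2 * x /\ t <= 1) by (unfold t, a_thr, b_thr in *; lra).
    simpl; nra.
  - rewrite fplus_above by lra; unfold b_thr in *; lra.
Qed.

Theorem corollary2 :
  forall x y z : R,
    0 <= x <= 1 -> 0 <= y <= 1 -> 0 <= z <= 1 ->
    2 * LP fplus fminus x y z >= ALG fplus fminus x y z.
Proof.
  intros x y z Hx Hy Hz.
  apply two_LP_ge_ALG_fminus; try lra.
  apply fplus_between_0_twice; lra.
Qed.
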